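(* Let $k,l\ge1$, $1\le r\le 2k(2l+1)$, $\mathcal{B}=\mathcal{B}(2k,2l+1;r)$ and $G=\langle H,V\rangle$. Then \[|\mathcal{O}_G(\mathcal{B})|=\frac14\left(\binom{2k(2l+1)}{r}+2\binom{k(2l+1)}{\frac r2}+\sum_{t=0}^{r}\binom{2k}{t}\binom{2kl}{\frac{r-t}{2}}\right).\]
   Context: $\mathcal{B}(2k,2l+1;r)$ is the set of all subsets of exactly $r$ cells (boards with $r$ blocked cells) of a grid with $2k$ rows and $2l+1$ columns. $\langle H,V\rangle=\{R_0,H,V,R_{180}\}$ is the group generated by the reflections $H$, $V$ across the horizontal and vertical midlines (with $R_{180}$ the 180-degree rotation), acting on boards; $\mathcal{O}_G(\mathcal{B})$ is the set of orbits. Convention: $\binom{a}{b}=0$ when $b$ is not a nonnegative integer or $b>a$. *)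

From mathcomp Require Import all_boot.
Set Implicit Arguments. Unset Strict Implicit. Unset Printing Implicit Defensive.

(* Grid with m rows and n columns: cells are pairs (row, column). *)
Definition cell (m n : nat) := ('I_m * 'I_n)%type.

Definition reflH m n (c : cell m n) : cell m n := (rev_ord c.1, c.2).
Definition reflV m n (c : cell m n) : cell m n := (c.1, rev_ord c.2).

(* The group <H,V> = {R0, H, V, R180}, indexed by (b1,b2) : bool*bool,
   acting on cells: (b1,b2) applies H if b1 and V if b2
   ((false,false)=R0, (true,false)=H, (false,true)=V, (true,true)=R180). *)
Definition HVact m n (g : bool * bool) (c : cell m n) : cell m n :=
  let c1 := if g.1 then reflH c else c in
  if g.2 then reflV c1 else c1.

(* Action on boards (sets of blocked cells). *)
Definition board_act m n (g : bool * bool) (B : {set cell m n}) : {set cell m n} :=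
  [set HVact g c | c in B].

Definition boards m n r : {set {set cell m n}} := [set B : {set cell m n} | #|B| == r].

Definition HVorbit m n (B : {set cell m n}) : {set {set cell m n}} :=
  [set board_act g B | g : bool * bool].

Definition HVorbits m n r : {set {set {set cell m n}}} :=
  [set HVorbit B | B in boards m n r].

(* binom(a, x/2) with the convention that it is 0 when x/2 is not an integer. *)
Definition binom_half (a x : nat) : nat := if odd x then 0 else 'C(a, x./2).

From HB Require Import structures.
From mathcomp Require Import all_boot all_algebra all_fingroup zify ring.
Set Implicit Arguments. Unset Strict Implicit. Unset Printing Implicit Defensive.

(* Burnside's lemma for <H,V> acting on r-boards gives 4 |O| as the sum of the numbers
   of r-boards fixed by R0, H, V and R180.  Each non-identity element f is an involution
   of the cells, and an f-invariant board is a union of f-orbits: a set A of fixed cells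
   together with a set C of 2-cycles, with |A| + 2|C| = r.  Choosing one cell in each
   2-cycle, the invariant r-boards are counted by sum_t C(#fixed, t) C(#2-cycles, (r-t)/2).
   With 2k rows, H and R180 fix no cell and pair the k(2l+1) cells of the top half with
   the bottom half; with 2l+1 columns, V fixes the 2k cells of the middle column and
   pairs the 2kl cells to its left with those to its right. *)

Lemma card_pairs_sum_eq (X Y : finType) (a : {pred X}) (b : {pred Y})
    (u : X -> nat) (v : Y -> nat) (r : nat) :
  #|[set p : X * Y | [&& p.1 \in a, p.2 \in b & u p.1 + v p.2 == r]]| =
  \sum_(t < r.+1) #|[set x in a | u x == t]| * #|[set y in b | v y == r - t]|.
Proof.
rewrite -sum1_card (partition_big (fun p : X * Y => inord (u p.1) : 'I_r.+1) xpredT) //=.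
apply: eq_bigr => t _; rewrite sum1dep_card -cardsX; apply: eq_card => -[x y].
rewrite !inE /= -val_eqE /=; case: (x \in a); case: (y \in b); rewrite ?andbF //=.
have := ltn_ord t; case: (leqP (u x) r) => [ux_le | ux_gt] t_lt.
  by rewrite inordK //; apply/andP/andP => -[/eqP e1 /eqP e2]; split; apply/eqP; lia.
have -> : (u x == t) = false by apply/negbTE/eqP; lia.
by apply/negbTE/nandP; left; apply/eqP; lia.
Qed.

Lemma cards_draws_double (T : finType) (A : {set T}) (n : nat) :
  #|[set B : {set T} | B \subset A & 2 * #|B| == n]| = binom_half #|A| n.
Proof.
rewrite /binom_half -cards_draws; have := odd_double_half n; rewrite -muln2.
case: ifP => n_odd /= n_eq; last by apply: eq_card => B; rewrite !inE; congr (_ && _); lia.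
by apply: eq_card0 => B; rewrite !inE; apply/negP => /andP[_]; lia.
Qed.

Section InvolutionInvariantSets.
Variables (T : finType) (f : T -> T) (P : {set T}).
Hypothesis fK : involutive f.
Hypothesis f_notin_P : {in P, forall x, f x \notin P}.
Hypothesis P_covers_moved : forall x, f x != x -> (x \in P) || (f x \in P).

Let F := [set x | f x == x].

Lemma mem_fix_f x : (f x \in F) = (x \in F).
Proof. by rewrite !inE fK eq_sym. Qed.

Lemma notin_fix_P x : x \in P -> x \notin F.
Proof. by move=> xP; rewrite inE; apply: contraNneq (f_notin_P xP) => ->. Qed.

Lemma imset_fix (A : {set T}) : A \subset F -> f @: A = A.
Proof.
move=> AF; rewrite -[RHS]imset_id; apply: eq_in_imset => x /(subsetP AF).
by rewrite inE => /eqP.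
Qed.

Lemma imset_invol (A : {set T}) : f @: (f @: A) = A.
Proof. by rewrite -imset_comp (eq_imset _ fK) imset_id. Qed.

Definition orbit_union (p : {set T} * {set T}) : {set T} := p.1 :|: p.2 :|: f @: p.2.

Definition orbit_split (S : {set T}) : {set T} * {set T} := (S :&: F, S :&: P).

Lemma orbit_union_invariant (A C : {set T}) :
  A \subset F -> f @: orbit_union (A, C) = orbit_union (A, C).
Proof. by move=> AF; rewrite /orbit_union !imsetU imset_fix // imset_invol setUAC. Qed.

Lemma disjoint_P_fix : [disjoint P & F].
Proof. by rewrite disjoints_subset; apply/subsetP => x xP; rewrite inE notin_fix_P. Qed.

Lemma disjoint_fP_fix : [disjoint f @: P & F].
Proof.
rewrite disjoints_subset; apply/subsetP => _ /imsetP[x xP ->].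
by rewrite inE mem_fix_f notin_fix_P.
Qed.

Lemma disjoint_fP_P : [disjoint f @: P & P].
Proof.
by rewrite disjoints_subset; apply/subsetP => _ /imsetP[x xP ->]; rewrite inE f_notin_P.
Qed.

Lemma card_orbit_union (A C : {set T}) : A \subset F -> C \subset P ->
  #|orbit_union (A, C)| = #|A| + 2 * #|C|.
Proof.
move=> AF CP; have fCP : f @: C \subset f @: P by apply: imsetS.
have CA0 : C :&: A = set0 by apply/disjoint_setI0/(disjointW CP AF disjoint_P_fix).
have fCA0 : f @: C :&: A = set0.
  by apply/disjoint_setI0/(disjointW fCP AF disjoint_fP_fix).
have fCC0 : f @: C :&: C = set0 by apply/disjoint_setI0/(disjointW fCP CP disjoint_fP_P).
rewrite /orbit_union /= cardsU setIUl ![_ :&: f @: C]setIC fCA0 fCC0 setU0 cards0 subn0.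
rewrite cardsU setIC CA0 cards0 subn0 (card_imset _ (inv_inj fK)).
by rewrite -addnA addnn -mul2n.
Qed.

Lemma orbit_unionK (A C : {set T}) : A \subset F -> C \subset P ->
  orbit_split (orbit_union (A, C)) = (A, C).
Proof.
move=> AF CP; have fCP : f @: C \subset f @: P by apply: imsetS.
have CF0 : C :&: F = set0.
  by apply/disjoint_setI0/(disjointW CP (subxx F) disjoint_P_fix).
have fCF0 : f @: C :&: F = set0.
  by apply/disjoint_setI0/(disjointW fCP (subxx F) disjoint_fP_fix).
have AP0 : A :&: P = set0.
  by rewrite setIC; apply/disjoint_setI0/(disjointW (subxx P) AF disjoint_P_fix).
have fCP0 : f @: C :&: P = set0.
  by apply/disjoint_setI0/(disjointW fCP (subxx P) disjoint_fP_P).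
rewrite /orbit_split /orbit_union /= !setIUl (setIidPl AF) (setIidPl CP).
by rewrite CF0 fCF0 AP0 fCP0 !setU0 set0U.
Qed.

Lemma orbit_splitK (S : {set T}) : f @: S = S -> orbit_union (orbit_split S) = S.
Proof.
move=> fS; apply/setP => x; rewrite /orbit_union /orbit_split /= !inE.
apply/idP/idP => [/orP[/orP[] /andP[] // | /imsetP[y] ] | xS].
  by rewrite inE => /andP[yS _] ->; rewrite -fS imset_f.
rewrite xS /=; have [// | fx_neq] := eqVneq (f x) x.
case/orP: (P_covers_moved fx_neq) => [-> // | fxP]; apply/orP; right; apply/imsetP.
by exists (f x); rewrite ?fK // !inE fxP -fS imset_f.
Qed.

Lemma card_invariant_sets (r : nat) :
  #|[set S : {set T} | (#|S| == r) && (f @: S == S)]| =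
  \sum_(0 <= t < r.+1) 'C(#|F|, t) * binom_half #|P| (r - t).
Proof.
pose D := [set p : {set T} * {set T} |
  [&& p.1 \in powerset F, p.2 \in powerset P & #|p.1| + 2 * #|p.2| == r]].
have D_sub p : p \in D -> (p.1 \subset F) && (p.2 \subset P).
  by rewrite /D !inE => /and3P[-> -> _].
have -> : [set S : {set T} | (#|S| == r) && (f @: S == S)] = orbit_union @: D.
  apply/setP => S; rewrite inE; apply/andP/imsetP => [[/eqP Sr /eqP fS] | [[A C]]].
    exists (orbit_split S); last by rewrite orbit_splitK.
    by rewrite /D !inE !subsetIr -card_orbit_union ?subsetIr // (orbit_splitK fS) Sr eqxx.
  move=> /[dup] /D_sub /andP[AF CP]; rewrite /D !inE => /and3P[_ _ /eqP <-] ->.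
  by rewrite card_orbit_union // orbit_union_invariant.
rewrite card_in_imset; last first.
  by apply: (can_in_inj (g := orbit_split)) => -[A C] /D_sub /andP[]; apply: orbit_unionK.
rewrite /D (card_pairs_sum_eq _ _ (fun A : {set T} => #|A|) (fun C : {set T} => 2 * #|C|)).
rewrite big_mkord; apply: eq_bigr => t _; congr (_ * _).
  by rewrite -cards_draws; apply: eq_card => A; rewrite !inE ?powersetE.
by rewrite -cards_draws_double; apply: eq_card => C; rewrite !inE ?powersetE.
Qed.

Lemma card_invariant_sets_fixpoint_free (r : nat) : (forall x, f x != x) ->
  #|[set S : {set T} | (#|S| == r) && (f @: S == S)]| = binom_half #|P| r.
Proof.
move=> moved; have F0 : F = set0 by apply/setP => x; rewrite !inE (negPf (moved x)).
rewrite card_invariant_sets F0 cards0 big_ltn // bin0 mul1n subn0 big_nat_cond big1 ?addn0 //.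
by move=> [|t] /andP[/andP[]].
Qed.

End InvolutionInvariantSets.

Definition klein4 := (bool * bool)%type.
HB.instance Definition _ := Finite.on klein4.

Definition klein4_mul (g h : klein4) : klein4 := (g.1 (+) h.1, g.2 (+) h.2).

Lemma klein4_mulA : associative klein4_mul.
Proof. by case=> [[] []] [[] []] [[] []]. Qed.

Lemma klein4_mul1g : left_id (false, false) klein4_mul.
Proof. by case=> [[] []]. Qed.

Lemma klein4_mulVg : left_inverse (false, false) id klein4_mul.
Proof. by case=> [[] []]. Qed.

HB.instance Definition _ :=
  Finite_isGroup.Build klein4 klein4_mulA klein4_mul1g klein4_mulVg.

Section HVAction.
Variables m n : nat.

Lemma HVactK (g : bool * bool) : involutive (@HVact m n g).
Proof. by case: g => [[] []] [i j]; rewrite /HVact /reflH /reflV /= ?rev_ordK. Qed.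

Definition HVact_klein (c : cell m n) (g : klein4) : cell m n := HVact g c.

Lemma HVact_klein1 : HVact_klein^~ 1%g =1 id.
Proof. by case. Qed.

Lemma HVact_kleinM c : act_morph HVact_klein c.
Proof.
case: c => i j [[] []] [[] []]; rewrite /HVact_klein /HVact /reflH /reflV /= ?rev_ordK //.
Qed.

Definition HVaction := TotalAction HVact_klein1 HVact_kleinM.

Lemma card_HVorbits_burnside r :
  #|HVorbits m n r| * 4 =
  \sum_(g : bool * bool) #|[set S : {set cell m n} | (#|S| == r) && (HVact g @: S == S)]|.
Proof.
have acts : [acts [set: klein4], on boards m n r | HVaction^*].
  apply/subsetP=> g _; rewrite !inE /=; apply/subsetP=> S.
  by rewrite !inE /= card_imset //; apply: act_inj.
have -> : HVorbits m n r = orbit HVaction^* [set: klein4] @: boards m n r.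
  apply: eq_imset => S; apply/setP=> T.
  by apply/imsetP/imsetP=> [[g _ ->]|[g _ ->]]; exists g.
have card_klein4 : #|[set: klein4]| = 4 by rewrite cardsT card_prod card_bool.
rewrite -card_klein4 -(Frobenius_Cauchy acts) (eq_bigl predT) => [|g]; last by rewrite inE.
by apply: eq_bigr => g _; apply: eq_card => S; rewrite !inE sub1set inE.
Qed.

End HVAction.

Lemma card_ord_lt (m k : nat) : k <= m -> #|[set i : 'I_m | i < k]| = k.
Proof.
move=> km; have -> : [set i : 'I_m | i < k] = widen_ord km @: [set: 'I_k].
  apply/setP => i; rewrite inE.
  apply/idP/imsetP => [ik | [j _ ->]]; last exact: (ltn_ord j).
  by exists (Ordinal ik); rewrite ?inE //; apply: val_inj.
by rewrite card_imset ?cardsT ?card_ord // => a b [] /val_inj.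
Qed.

Section GridCounts.
Variables m n : nat.

Lemma card_top_rows k : k <= m -> #|[set c : cell m n | c.1 < k]| = k * n.
Proof.
move=> km; have -> : [set c : cell m n | c.1 < k] = setX [set i : 'I_m | i < k] setT.
  by apply/setP => -[i j]; rewrite !inE andbT.
by rewrite cardsX card_ord_lt // cardsT card_ord.
Qed.

Lemma card_left_cols l : l <= n -> #|[set c : cell m n | c.2 < l]| = m * l.
Proof.
move=> ln; have -> : [set c : cell m n | c.2 < l] = setX setT [set j : 'I_n | j < l].
  by apply/setP => -[i j]; rewrite !inE.
by rewrite cardsX card_ord_lt // cardsT card_ord.
Qed.

Lemma card_invariant_boards_id r :
  #|[set S : {set cell m n} | (#|S| == r) && (HVact (false, false) @: S == S)]| =
  'C(m * n, r).
Proof.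
rewrite -[m in RHS]card_ord -[n in RHS]card_ord -card_prod -card_draws.
by apply: eq_card => S; rewrite !inE imset_id eqxx andbT.
Qed.

End GridCounts.

Lemma card_invariant_boards_row_flip k n (f : cell (2 * k) n -> cell (2 * k) n) r :
  involutive f -> (forall c, (f c).1 = rev_ord c.1) ->
  #|[set S : {set cell (2 * k) n} | (#|S| == r) && (f @: S == S)]| = binom_half (k * n) r.
Proof.
move=> fK f_row.
rewrite (@card_invariant_sets_fixpoint_free _ _ [set c : cell (2 * k) n | c.1 < k]) //.
- by rewrite card_top_rows //; lia.
- by move=> c; rewrite !inE f_row /=; have := ltn_ord c.1; lia.
- by move=> c _; rewrite !inE f_row /=; have := ltn_ord c.1; lia.
- move=> c; apply/eqP => /(congr1 (fun c => val c.1)); rewrite f_row /=.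
  by have := ltn_ord c.1; lia.
Qed.

Lemma card_invariant_boards_col_flip m l r :
  #|[set S : {set cell m (2 * l + 1)} | (#|S| == r) && (HVact (false, true) @: S == S)]| =
  \sum_(0 <= t < r.+1) 'C(m, t) * binom_half (m * l) (r - t).
Proof.
have l_lt : l < 2 * l + 1 by lia.
have fixed_mid : [set c : cell m (2 * l + 1) | HVact (false, true) c == c] =
                 setX setT [set Ordinal l_lt].
  apply/setP => -[i j]; rewrite !inE /HVact /reflV /= xpair_eqE eqxx /= -!val_eqE /=.
  by have := ltn_ord j; lia.
rewrite (@card_invariant_sets _ _ [set c : cell m (2 * l + 1) | c.2 < l]).
- by rewrite fixed_mid cardsX cardsT cards1 card_ord muln1 card_left_cols //; lia.
- exact: HVactK.
- by move=> c; rewrite !inE /=; have := ltn_ord c.2; lia.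
- move=> [i j]; rewrite !inE /HVact /reflV /= xpair_eqE eqxx /= -val_eqE /=.
  by have := ltn_ord j; lia.
Qed.

Lemma card_HVorbits_grid k l r :
  #|HVorbits (2 * k) (2 * l + 1) r| * 4 =
  'C(2 * k * (2 * l + 1), r) + 2 * binom_half (k * (2 * l + 1)) r +
  \sum_(0 <= t < r.+1) 'C(2 * k, t) * binom_half (2 * k * l) (r - t).
Proof.
pose fixed g := #|[set S : {set cell (2 * k) (2 * l + 1)} |
                    (#|S| == r) && (HVact g @: S == S)]|.
rewrite card_HVorbits_burnside (eq_bigr (fun g => fixed (g.1, g.2))) => [|[] //].
rewrite -(pair_bigA _ (fun a b => fixed (a, b))) !big_bool /fixed /=.
rewrite card_invariant_boards_id card_invariant_boards_col_flip.
rewrite !(card_invariant_boards_row_flip _ (@HVactK _ _ _)) //; lia.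
Qed.

Import GRing.Theory.
Local Open Scope ring_scope.

Theorem proposition5p5 (k l r : nat) :
  (1 <= k)%N -> (1 <= l)%N -> (1 <= r <= (2 * k) * (2 * l + 1))%N ->
  (#|HVorbits (2 * k) (2 * l + 1) r|%:R : rat) =
  4%:R^-1 * ( ('C((2 * k) * (2 * l + 1), r))%:R
            + 2%:R * (binom_half (k * (2 * l + 1)) r)%:R
            + (\sum_(0 <= t < r.+1) 'C(2 * k, t) * binom_half (2 * k * l) (r - t))%N%:R ).
Proof.
move=> _ _ _; rewrite -[LHS](@mulfK _ 4) // -(natrM _ _ 4) card_HVorbits_grid.
by rewrite 2!natrD natrM; ring.
Qed.
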